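(* For $\varepsilon\in[0,1]$, let $C(\varepsilon)=\min\{C(P,Q) : P,Q \text{ probability distributions on a common countable set with } d_{\text{TV}}(P,Q)=\varepsilon\}$. This minimum exists and $$C(\varepsilon)=\begin{cases}-\frac12\log(1-\varepsilon^2) & \text{if } \varepsilon\in[0,1),\\ +\infty & \text{if } \varepsilon=1.\end{cases}$$ For $\varepsilon\in[0,1)$ it is achieved by the pair of 2-element distributions $P=\left(\frac{1-\varepsilon}{2},\frac{1+\varepsilon}{2}\right)$, $Q=\left(\frac{1+\varepsilon}{2},\frac{1-\varepsilon}{2}\right)$.
   Context: For probability distributions $P,Q$ on a countable set, $d_{\text{TV}}(P,Q)=\frac12\sum_x|P(x)-Q(x)|$ is the total variation distance, and the Chernoff information is $C(P,Q)=-\min_{\lambda\in[0,1]}\log\left(\sum_x P(x)^\lambda Q(x)^{1-\lambda}\right)$. Logarithms are natural. *)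

From HB Require Import structures.
From mathcomp Require Import all_boot all_order all_algebra.
From mathcomp Require Import all_classical all_reals all_analysis.
Set Implicit Arguments. Unset Strict Implicit. Unset Printing Implicit Defensive.
Import Order.TTheory GRing.Theory Num.Theory.
Local Open Scope classical_set_scope.
Local Open Scope ring_scope.

Definition is_distr (R : realType) (T : countType) (P : T -> R) : Prop :=
  (forall x, 0 <= P x) /\ (\esum_(x in [set: T]) (P x)%:E = 1%E).

Definition tv_dist (R : realType) (T : countType) (P Q : T -> R) : \bar R :=
  ((2^-1)%:E * \esum_(x in [set: T]) (`|P x - Q x|)%:E)%E.

(* sum_x P(x)^lambda Q(x)^(1-lambda), with the convention 0^0 = 1 (powR). *)
Definition chernoff_sum (R : realType) (T : countType) (P Q : T -> R)
  (l : R) : \bar R :=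
  \esum_(x in [set: T]) (P x `^ l * Q x `^ (1 - l))%:E.

Definition neg_log_e (R : realType) (s : \bar R) : \bar R :=
  match s with
  | r%:E => if r == 0 then +oo%E else (- ln r)%:E
  | +oo%E => -oo%E
  | -oo%E => +oo%E
  end.

(* Chernoff information C(P,Q) = - min_{l in [0,1]} log(sum_x P^l Q^(1-l))
   = sup_{l in [0,1]} -log(...), valued in extended reals. *)
Definition chernoff_info (R : realType) (T : countType) (P Q : T -> R) : \bar R :=
  ereal_sup [set neg_log_e (chernoff_sum P Q l) | l in `[0, 1]%classic].

Definition Ceps (R : realType) (e : R) : \bar R :=
  if e < 1 then (- (2^-1) * ln (1 - e ^+ 2))%:E else +oo%E.

(* The extremal pair on a 2-element set (bool: false ~ first, true ~ second). *)
Definition Pext (R : realType) (e : R) (b : bool) : R :=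
  if b then (1 + e) / 2 else (1 - e) / 2.
Definition Qext (R : realType) (e : R) (b : bool) : R :=
  if b then (1 - e) / 2 else (1 + e) / 2.

From mathcomp Require Import all_boot all_order all_algebra.
From mathcomp Require Import all_classical all_reals all_analysis.
From mathcomp Require Import ring lra.
Set Implicit Arguments.
Unset Strict Implicit.
Unset Printing Implicit Defensive.

Import Order.TTheory GRing.Theory Num.Theory.
Local Open Scope classical_set_scope.
Local Open Scope ring_scope.

(* Taking lambda = 1/2 bounds C(P,Q) below by -log BC, where
   BC = sum_x sqrt(P x Q x) is the Bhattacharyya coefficient.  For t >= 1 the
   pointwise inequality 4 t sqrt(p q) + (t^2 - 1) |p - q| <= (t^2 + 1) (p + q),
   summed over x, gives 2 t BC <= t^2 (1 - e) + (1 + e).  Optimising in t yields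
   BC^2 <= 1 - e^2 (for e = 1, letting t grow forces BC = 0), which is the
   Cauchy-Schwarz bound obtained without square-summability arguments.  For the
   symmetric two-point pair the two terms of every Chernoff sum have product
   (1 - e^2) / 4, so by AM-GM each Chernoff sum is at least sqrt(1 - e^2). *)

Lemma esumZl (R : realType) (T : choiceType) (D : set T) (r : R)
    (a : T -> \bar R) : 0 <= r -> (forall i, (0 <= a i)%E) ->
  (\esum_(i in D) (r%:E * a i) = r%:E * \esum_(i in D) a i)%E.
Proof.
move=> r0 a0; have [->|rn0] := eqVneq r 0.
  by rewrite mul0e esum1 // => i _; rewrite mul0e.
rewrite /esum -ereal_sup_pZl ?lt0r ?rn0 //; congr ereal_sup.
by rewrite image_comp; apply: eq_imagel => A _ /=; rewrite ge0_mule_fsumr.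
Qed.

Lemma esum_bool (R : realType) (a : bool -> \bar R) :
  (forall i, (0 <= a i)%E) -> (\esum_(i in [set: bool]) a i = a false + a true)%E.
Proof.
move=> a0; rewrite esum_fset; [|exact: finite_finset|by []].
have -> : [set: bool] = [set false] `|` [set true].
  by apply/seteqP; split => // -[] _; [right|left].
rewrite fsbigU0 ?fsbig_set1 //; try exact: finite_finset.
by move=> x [/= ->].
Qed.

Lemma sqrt_mul_weighted_le (R : realType) (p q t : R) :
  0 <= p -> 0 <= q -> 1 <= t ->
  4 * t * (Num.sqrt p * Num.sqrt q) + (t ^+ 2 - 1) * `|p - q|
    <= (t ^+ 2 + 1) * (p + q).
Proof.
move=> p0 q0 t1.
have [u u0 ->] : exists2 u : R, 0 <= u & p = u ^+ 2.
  by exists (Num.sqrt p); rewrite ?sqrtr_ge0 ?sqr_sqrtr.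
have [v v0 ->] : exists2 v : R, 0 <= v & q = v ^+ 2.
  by exists (Num.sqrt q); rewrite ?sqrtr_ge0 ?sqr_sqrtr.
rewrite !sqrtr_sqr (ger0_norm u0) (ger0_norm v0).
wlog uv : u v u0 v0 / u <= v => [wlog_uv|].
  have [|vu] := leP u v; first exact: wlog_uv.
  by rewrite [u * v]mulrC distrC [u ^+ 2 + _]addrC wlog_uv // ltW.
rewrite distrC ger0_norm ?subr_ge0 ?ler_sqr //.
(* the difference of the two sides is 2 (t u - v)^2 *)
by have := sqr_ge0 (t * u - v); nra.
Qed.

Lemma sqr_le_of_weighted_le (R : realType) (b e : R) :
  0 <= b -> 0 <= e -> e <= 1 ->
  (forall t, 1 <= t -> 2 * b * t <= t ^+ 2 * (1 - e) + (1 + e)) ->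
  b ^+ 2 <= 1 - e ^+ 2.
Proof.
move=> b0 e0 e1 hb; have [elt|ege] := ltP e 1.
  set s := Num.sqrt (1 - e ^+ 2).
  have s2 : s ^+ 2 = 1 - e ^+ 2 by rewrite sqr_sqrtr // subr_ge0; nra.
  have s0 : 0 < s by rewrite sqrtr_gt0; nra.
  have s1 : s <= 1 + e by rewrite -ler_sqr ?nnegrE ?s2; nra.
  (* the optimal weight t = sqrt((1 + e) / (1 - e)) *)
  have ts : (1 + e) / s * s = 1 + e by rewrite divfK // gt_eqF.
  have := hb ((1 + e) / s); move: ((1 + e) / s) ts => t ts.
  have t1 : 1 <= t by nra.
  move=> /(_ t1) /(ler_wpM2l (sqr_ge0 s)).
  have -> : s ^+ 2 * (2 * b * t) = 2 * (1 + e) * (b * s) by rewrite -ts; ring.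
  have -> : s ^+ 2 * (t ^+ 2 * (1 - e) + (1 + e)) = 2 * (1 + e) * s ^+ 2.
    transitivity ((t * s) ^+ 2 * (1 - e) + s ^+ 2 * (1 + e)); first by ring.
    by rewrite ts s2; ring.
  rewrite ler_pM2l ?expr2 ?ler_pM2r //; last by lra.
  by move=> bs; rewrite -s2 ler_sqr ?nnegrE // ltW.
have e_1 : e = 1 by apply: le_anti; rewrite e1.
subst e.
have [->|bn0] := eqVneq b 0; first by rewrite expr0n /= expr1n subrr.
have bV : b * b^-1 = 1 by rewrite mulfV.
have := hb (1 + b^-1) ltac:(by rewrite lerDl invr_ge0).
by rewrite subrr; nra.
Qed.

Definition bhattacharyya (R : realType) (T : countType) (P Q : T -> R) :
    \bar R :=
  \esum_(x in [set: T]) (Num.sqrt (P x) * Num.sqrt (Q x))%:E.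

Lemma chernoff_sum_half (R : realType) (T : countType) (P Q : T -> R) :
  (forall x, 0 <= P x) -> (forall x, 0 <= Q x) ->
  chernoff_sum P Q 2^-1 = bhattacharyya P Q.
Proof.
move=> P0 Q0; apply: eq_esum => x _.
by rewrite (_ : 1 - 2^-1 = 2^-1) ?powR12_sqrt //; field.
Qed.

Lemma esum_dist_tv (R : realType) (T : countType) (P Q : T -> R) (e : R) :
  tv_dist P Q = e%:E -> \esum_(x in [set: T]) (`|P x - Q x|)%:E = (2 * e)%:E.
Proof.
rewrite /tv_dist; have : (0 <= \esum_(x in [set: T]) (`|P x - Q x|)%:E)%E.
  by apply: esum_ge0 => x _; rewrite lee_fin.
case: (\esum_(x in [set: T]) _) => [d| |] // _.
  by move=> [<-]; congr EFin; field.
by rewrite mulry gtr0_sg // mul1e.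
Qed.

Section BhattacharyyaBound.
Variables (R : realType) (T : countType) (P Q : T -> R).
Hypotheses (hP : is_distr P) (hQ : is_distr Q).

Lemma bhattacharyya_weighted_le (t : R) : 1 <= t ->
  ((4 * t)%:E * bhattacharyya P Q
    + (t ^+ 2 - 1)%:E * (\esum_(x in [set: T]) (`|P x - Q x|)%:E)
   <= (2 * (t ^+ 2 + 1))%:E)%E.
Proof.
move: hP hQ => [P0 sumP] [Q0 sumQ] t1.
have t0 : 0 <= t by lra.
rewrite -!esumZl ?subr_ge0 ?expr_ge1 ?mulr_ge0 //.
rewrite -esumD; last 2 first.
- by move=> x _; rewrite -EFinM lee_fin mulr_ge0 ?mulr_ge0 ?sqrtr_ge0.
- by move=> x _; rewrite -EFinM lee_fin mulr_ge0 ?subr_ge0 ?expr_ge1.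
have -> : (2 * (t ^+ 2 + 1))%:E
    = \esum_(x in [set: T]) ((t ^+ 2 + 1) * (P x + Q x))%:E.
  under eq_esum do rewrite EFinM.
  rewrite esumZl ?addr_ge0 ?sqr_ge0 //; last by move=> x; rewrite lee_fin addr_ge0.
  under eq_esum do rewrite EFinD.
  rewrite esumD ?sumP ?sumQ; last 2 first.
  - by move=> x _; rewrite lee_fin.
  - by move=> x _; rewrite lee_fin.
  by rewrite -EFinD -EFinM mulrC.
apply: le_esum => x _; rewrite -!EFinM -EFinD lee_fin.
exact: sqrt_mul_weighted_le.
Qed.

Lemma bhattacharyya_sqr_le (e : R) : 0 <= e -> e <= 1 ->
  tv_dist P Q = e%:E ->
  exists2 b, bhattacharyya P Q = b%:E & 0 <= b /\ b ^+ 2 <= 1 - e ^+ 2.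
Proof.
move=> e0 e1 /esum_dist_tv sumD.
have := bhattacharyya_weighted_le.
have : (0 <= bhattacharyya P Q)%E.
  by apply: esum_ge0 => x _; rewrite lee_fin mulr_ge0 ?sqrtr_ge0.
case: (bhattacharyya P Q) => [b| |] // b0 hb; last first.
  have := hb 1 (lexx 1).
  by rewrite expr1n subrr mul0e adde0 mulr1 mulry gtr0_sg // mul1e leNgt ltry.
exists b => //; split; first by rewrite -lee_fin.
apply: sqr_le_of_weighted_le; rewrite -?lee_fin // => t t1.
have := hb t t1; rewrite sumD -!EFinM -EFinD lee_fin.
nra.
Qed.

End BhattacharyyaBound.

Lemma Ceps_le_neg_log (R : realType) (e b : R) :
  0 <= b -> b ^+ 2 <= 1 - e ^+ 2 -> (Ceps e <= neg_log_e b%:E)%E.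
Proof.
move=> b0 be; rewrite /neg_log_e; have [_|bn0] := eqVneq b 0; first exact: leey.
have bpos : 0 < b by rewrite lt0r bn0.
have elt : e < 1 by rewrite ltNge; apply/negP => e1; nra.
rewrite /Ceps elt lee_fin.
have : ln (b ^+ 2) <= ln (1 - e ^+ 2) by rewrite ler_ln ?posrE ?exprn_gt0 //; nra.
by rewrite lnXn // mulr2n; lra.
Qed.

Lemma Ceps_le_chernoff_info (R : realType) (T : countType) (P Q : T -> R)
    (e : R) : 0 <= e -> e <= 1 -> is_distr P -> is_distr Q ->
  tv_dist P Q = e%:E -> (Ceps e <= chernoff_info P Q)%E.
Proof.
move=> e0 e1 hP hQ tvPQ.
have [b Bb [b0 be]] := bhattacharyya_sqr_le hP hQ e0 e1 tvPQ.
apply: (le_trans (Ceps_le_neg_log b0 be)); rewrite -Bb.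
move: hP hQ => [P0 _] [Q0 _]; rewrite -chernoff_sum_half //.
apply: ereal_sup_ubound; exists 2^-1 => //=.
by rewrite in_itv /= invr_ge0 ler0n invf_le1 ?ler1n.
Qed.

Lemma neg_log_le_Ceps (R : realType) (e z : R) :
  0 <= e -> e < 1 -> 0 < z -> 1 - e ^+ 2 <= z ^+ 2 ->
  (neg_log_e z%:E <= Ceps e)%E.
Proof.
move=> e0 elt z0 ez; rewrite /neg_log_e (gt_eqF z0) /Ceps elt lee_fin.
have : ln (1 - e ^+ 2) <= ln (z ^+ 2).
  by rewrite ler_ln ?posrE ?exprn_gt0 //; nra.
by rewrite lnXn // mulr2n; lra.
Qed.

Lemma is_distr_Pext (R : realType) (e : R) : -1 <= e <= 1 -> is_distr (Pext e).
Proof.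
move=> /andP[e0 e1]; split; first by case; rewrite /Pext /=; lra.
rewrite esum_bool; last by case; rewrite lee_fin /Pext /=; lra.
by rewrite /Pext /= -EFinD; congr EFin; field.
Qed.

Lemma is_distr_Qext (R : realType) (e : R) : -1 <= e <= 1 -> is_distr (Qext e).
Proof.
move=> /andP[e0 e1]; split; first by case; rewrite /Qext /=; lra.
rewrite esum_bool; last by case; rewrite lee_fin /Qext /=; lra.
by rewrite /Qext /= -EFinD; congr EFin; field.
Qed.

Lemma tv_dist_ext (R : realType) (e : R) : 0 <= e ->
  tv_dist (Pext e) (Qext e) = e%:E.
Proof.
move=> e0; rewrite /tv_dist esum_bool; last by move=> b; rewrite lee_fin.
rewrite /Pext /Qext /= -EFinD -EFinM; congr EFin.
rewrite (_ : (1 - e) / 2 - (1 + e) / 2 = - e); last by field.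
rewrite (_ : (1 + e) / 2 - (1 - e) / 2 = e); last by field.
by rewrite normrN ger0_norm //; field.
Qed.

Lemma chernoff_sum_ext (R : realType) (e l : R) :
  let a := (1 - e) / 2 in let c := (1 + e) / 2 in
  chernoff_sum (Pext e) (Qext e) l
    = (a `^ l * c `^ (1 - l) + c `^ l * a `^ (1 - l))%:E.
Proof.
by rewrite /chernoff_sum esum_bool // => b; rewrite lee_fin mulr_ge0 ?powR_ge0.
Qed.

Lemma sqr_powR_cross_ge (R : realType) (a c l : R) : 0 < a -> 0 < c ->
  4 * (a * c) <= (a `^ l * c `^ (1 - l) + c `^ l * a `^ (1 - l)) ^+ 2.
Proof.
move=> a0 c0.
have powRK x : 0 < x -> x `^ l * x `^ (1 - l) = x.
  move=> x0; rewrite -powRD; last by apply/implyP => _; rewrite gt_eqF.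
  by rewrite addrC subrK powRr1 // ltW.
set x := a `^ l * _; set y := c `^ l * _.
have -> : a * c = x * y.
  rewrite -{1}(powRK a a0) -{1}(powRK c c0) /x /y; ring.
rewrite (_ : (x + y) ^+ 2 = (x - y) ^+ 2 + 4 * (x * y)); last by ring.
by rewrite lerDr sqr_ge0.
Qed.

Lemma chernoff_info_ext_le (R : realType) (e : R) : 0 <= e -> e < 1 ->
  (chernoff_info (Pext e) (Qext e) <= Ceps e)%E.
Proof.
move=> e0 elt; apply: ge_ereal_sup => _ [l _ <-].
rewrite chernoff_sum_ext /=.
have a0 : 0 < (1 - e) / 2 by lra.
have c0 : 0 < (1 + e) / 2 by lra.
apply: neg_log_le_Ceps => //.
- by rewrite addr_gt0 // mulr_gt0 // powR_gt0.
- have -> : 1 - e ^+ 2 = 4 * ((1 - e) / 2 * ((1 + e) / 2)) by field.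
  exact: sqr_powR_cross_ge.
Qed.

Theorem proposition2 (R : realType) (e : R) (he0 : 0 <= e) (he1 : e <= 1) :
  (* lower bound over all pairs on all countable sets with d_TV = e *)
  (forall (T : countType) (P Q : T -> R),
      is_distr P -> is_distr Q -> tv_dist P Q = e%:E ->
      (Ceps e <= chernoff_info P Q)%E) /\
  (* the minimum exists (is attained) *)
  (exists (T : countType) (P Q : T -> R),
      [/\ is_distr P, is_distr Q, tv_dist P Q = e%:E & chernoff_info P Q = Ceps e]) /\
  (* for e < 1 it is attained by the explicit 2-element pair *)
  (e < 1 ->
     [/\ is_distr (Pext e), is_distr (Qext e), tv_dist (Pext e) (Qext e) = e%:E
       & chernoff_info (Pext e) (Qext e) = Ceps e]).
Proof.
have he : -1 <= e <= 1 by apply/andP; split => //; lra.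
have hP := is_distr_Pext he; have hQ := is_distr_Qext he.
have htv := tv_dist_ext he0.
have lower := Ceps_le_chernoff_info he0 he1.
have ext_eq : chernoff_info (Pext e) (Qext e) = Ceps e.
  apply: le_anti; rewrite lower // andbT.
  have [elt|ege] := ltP e 1; first exact: chernoff_info_ext_le.
  by rewrite /Ceps ltNge ege leey.
split; first exact: lower.
by split; [exists bool, (Pext e), (Qext e)|].
Qed.
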